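(* For all integers $k,l\ge2$, $La^*([k]\times[l],\vee_3)=2(k+l)-4$.
   Context: $[k]\times[l]$ is ordered coordinatewise. $\vee_3$ is the poset on four elements $a,b_1,b_2,b_3$ whose only relations are $a<b_i$, $i=1,2,3$. For posets $P,R$, $P$ is a strong subposet of $R$ if there is an injection $i:P\to R$ with $p\le_P p'\iff i(p)\le_R i(p')$. A subset $F\subseteq Q$ is strong $P$-free if $P$ is not a strong subposet of $F$ with the induced order; $La^*(Q,P)$ is the maximum size of a strong $P$-free subset of $Q$. *)

From mathcomp Require Import all_boot.
Set Implicit Arguments. Unset Strict Implicit. Unset Printing Implicit Defensive.

(* The grid [k] x [l]: elements (i,j) with i in {0..k-1}, j in {0..l-1}
   (a relabelling of {1..k} x {1..l}), ordered coordinatewise. *)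
Definition grid (k l : nat) : finType := ('I_k * 'I_l)%type.

Definition grid_le (k l : nat) (x y : grid k l) : bool :=
  (x.1 <= y.1)%N && (x.2 <= y.2)%N.

(* The poset V_3 on four elements a = 0, b_1 = 1, b_2 = 2, b_3 = 3,
   whose only strict relations are a < b_i. *)
Definition vee3_le (x y : 'I_4) : bool := (x == y) || (val x == 0%N).

Definition strong_subposet_in (P R : finType) (leP : rel P) (leR : rel R)
  (F : {set R}) : Prop :=
  exists i : P -> R,
    injective i /\ (forall p, i p \in F) /\
    (forall p p', leP p p' = leR (i p) (i p')).

Definition strong_vee3_free (k l : nat) (F : {set grid k l}) : Prop :=
  ~ strong_subposet_in vee3_le (@grid_le k l) F.

Definition is_La_star_grid_vee3 (k l m : nat) : Prop :=
  (exists F : {set grid k l}, strong_vee3_free F /\ #|F| = m) /\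
  (forall F : {set grid k l}, strong_vee3_free F -> (#|F| <= m)%N).

From mathcomp Require Import all_boot zify.
Set Implicit Arguments. Unset Strict Implicit. Unset Printing Implicit Defensive.

(* Lower bound: the frame of the grid (the points on its boundary) has
   2(k+l)-4 points and is V_3-free, because among three pairwise incomparable
   grid points the middle one (in the first coordinate) lies strictly inside.

   Upper bound: by induction on the numbers of rows and columns.  To make the
   induction go through, a configuration comes with a set of links between
   consecutive rows: along a chain of linked rows, going up never decreases
   the first coordinate.  One bounds (number of points) + (number of links) by
   2(K+L)-4.  A row with at most two points, or at most one if a link touches
   it, is deleted, and the two links around it are merged into one.  If there
   is no such row, there are at least three columns (with two, every row would
   be full and linked, and the lowest link would be violated), and no point of
   the first column sits directly above a link (the linked row below it has a
   point further right).  The first column is then deleted and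
   each of its points strictly between its lowest point lo and its highest
   point hi is traded for a new link: rows lo .. hi-1 may be linked because an
   inversion among them would form a V_3 with the points at lo and hi. *)

Lemma sum_nat_eq_le1 n a : \sum_(0 <= y < n) (y == a : nat) <= 1.
Proof. by rewrite -big_mkcond /= big_nat1_eq; case: ifP. Qed.

Lemma sum_nat_bump (f : nat -> nat) n r : r <= n ->
  \sum_(0 <= y < n.+1) f y = f r + \sum_(0 <= y < n) f (bump r y).
Proof. by move=> hr; rewrite !big_mkord (bigD1_ord (Ordinal (hr : r < n.+1))). Qed.

Lemma ltn_bump2 h i j : (bump h i < bump h j) = (i < j).
Proof. by rewrite !ltnNge leq_bump2. Qed.

Section Configurations.

Implicit Types (P : nat -> nat -> bool) (lk : nat -> bool).

Definition npoints K L P := \sum_(0 <= x < K) \sum_(0 <= y < L) (P x y : nat).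
Definition nlinks L lk := \sum_(0 <= y < L) (lk y : nat).
Definition weight K L P lk := npoints K L P + nlinks L lk.
Definition row_size K P y := \sum_(0 <= x < K) (P x y : nat).

(* [lk y] links row [y] to row [y.+1]. *)
Definition linked lk y := (0 < y) && lk y.-1 || lk y.

Definition no_vee3 P := forall a1 a2 x1 y1 x2 y2 x3 y3,
  P a1 a2 -> P x1 y1 -> P x2 y2 -> P x3 y3 -> a1 <= x1 -> a2 <= y3 ->
  x1 < x2 -> x2 < x3 -> y3 < y2 -> y2 < y1 -> False.

Definition links_monotone P lk := forall px py qx qy,
  P px py -> P qx qy -> py < qy -> (forall y, py <= y < qy -> lk y) -> px <= qx.

Definition admissible K L P lk :=
  [/\ forall x y, P x y -> (x < K) && (y < L), no_vee3 P,
      links_monotone P lk & forall y, lk y -> y.+1 < L].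

Definition del_row r P x y := P x (bump r y).
Definition del_row_links r lk y :=
  if y.+1 == r then lk y && lk r else lk (bump r y).

Lemma links_monotone_del_row r P lk : links_monotone P lk ->
  links_monotone (del_row r P) (del_row_links r lk).
Proof.
move=> hmono px py qx qy hp hq hpq hpath.
apply: (hmono _ _ _ _ hp hq); first by rewrite ltn_bump2.
have hlk y : py <= y < qy -> lk (bump r y).
  move=> /hpath; rewrite /del_row_links; case: eqP => // <- /andP [hy _].
  by rewrite /bump ltnn.
move=> g; case: (eqVneq g r) => [->|gr] hg.
  have r0 : 0 < r by move: hg; rewrite /bump; lia.
  have /hpath : py <= r.-1 < qy by move: hg; rewrite /bump; lia.
  by rewrite /del_row_links prednK // eqxx => /andP [].
have <- : bump r (unbump r g) = g by rewrite unbumpKcond (negbTE gr).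
by apply: hlk; move: hg gr; rewrite /bump /unbump; lia.
Qed.

Lemma admissible_del_row K L r P lk : r <= L -> admissible K L.+1 P lk ->
  admissible K L (del_row r P) (del_row_links r lk).
Proof.
move=> hr [hsupp hfree hmono hbnd]; split.
- by move=> x y /hsupp; rewrite /bump; lia.
- move=> a1 a2 x1 y1 x2 y2 x3 y3 ha h1 h2 h3 e1 e2 e3 e4 e5 e6.
  by apply: (hfree _ _ _ _ _ _ _ _ ha h1 h2 h3 e1 _ e3 e4);
    rewrite ?leq_bump2 ?ltn_bump2.
- exact: links_monotone_del_row.
- move=> y; rewrite /del_row_links.
  case: (eqVneq y.+1 r) => [<- /andP [_ /hbnd //]|ny /hbnd].
  by move: ny; rewrite /bump; case: leqP; lia.
Qed.

Lemma npoints_del_row K L r P : r <= L ->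
  npoints K L.+1 P = npoints K L (del_row r P) + row_size K P r.
Proof.
move=> hr; rewrite /npoints /row_size -big_split; apply: eq_bigr => x _.
by rewrite (sum_nat_bump _ hr) addnC.
Qed.

Lemma nlinks_del_row L r lk : r <= L ->
  nlinks L.+1 lk <= nlinks L (del_row_links r lk) + linked lk r.
Proof.
move=> hr; rewrite /nlinks (sum_nat_bump _ hr).
set c := (0 < r) && lk r.-1 && ~~ lk r.
have hpt : \sum_(0 <= y < L) (lk (bump r y) : nat) <=
           \sum_(0 <= y < L) ((del_row_links r lk y : nat) + (y == r.-1) * c).
  apply: leq_sum => y _; rewrite /del_row_links /c.
  case: (eqVneq y.+1 r) => [<-|ny]; last by rewrite leq_addr.
  by rewrite /bump ltnn eqxx /=; case: (lk y); case: (lk y.+1).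
rewrite big_split -big_distrl /= in hpt.
have := sum_nat_eq_le1 L r.-1.
have : (lk r : nat) + c <= linked lk r.
  by rewrite /c /linked; case: (lk r); case: (lk r.-1); case: (0 < r).
nia.
Qed.

Lemma weight_del_row K L r P lk : r <= L ->
  weight K L.+1 P lk <=
  weight K L (del_row r P) (del_row_links r lk) + (row_size K P r + linked lk r).
Proof.
move=> hr; have := nlinks_del_row lk hr.
by rewrite /weight (npoints_del_row _ _ hr); lia.
Qed.

Definition drop_col P x y := P x.+1 y.
Definition col0_size L P := \sum_(0 <= y < L) (P 0 y : nat).

Lemma npoints_drop_col K L P :
  npoints K.+1 L P = col0_size L P + npoints K L (drop_col P).
Proof. by rewrite /npoints big_nat_recl. Qed.

Lemma row_size_drop_col K P y :
  row_size K.+1 P y = P 0 y + row_size K (drop_col P) y.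
Proof. by rewrite /row_size big_nat_recl. Qed.

Lemma link_blocks_col0 K P lk y : links_monotone P lk -> lk y ->
  2 <= row_size K.+1 P y -> ~~ P 0 y.+1.
Proof.
move=> hmono hy hsize; apply/negP => h0.
have hrow : row_size K (drop_col P) y = 0.
  apply: big1 => x _; apply/eqP; rewrite eqb0; apply/negP => hx.
  suff : x.+1 <= 0 by [].
  by apply: (hmono _ _ _ _ hx h0 (ltnSn y)) => g; rewrite ltnS -eqn_leq => /eqP <-.
by move: hsize; rewrite row_size_drop_col hrow; case: (P 0 y).
Qed.

Lemma admissible_drop_col_links K L P lk lk' : admissible K.+1 L P lk ->
  links_monotone (drop_col P) lk' -> (forall y, lk' y -> y.+1 < L) ->
  admissible K L (drop_col P) lk'.
Proof.
case=> hsupp hfree _ _ hmono hbnd; split=> //.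
- by move=> x y /hsupp.
- move=> a1 a2 x1 y1 x2 y2 x3 y3 ha h1 h2 h3 e1.
  exact: (hfree _ _ _ _ _ _ _ _ ha h1 h2 h3).
Qed.

Definition span_links lo hi lk y := lk y || (lo <= y) && (y.+2 <= hi).

Lemma links_monotone_span lo hi P lk : no_vee3 P -> links_monotone P lk ->
  (forall y, lk y -> ~~ P 0 y.+1) -> P 0 lo -> P 0 hi ->
  links_monotone (drop_col P) (span_links lo hi lk).
Proof.
move=> hfree hmono hblock hlo hhi px py qx qy hp hq hpq hpath.
have [/andP [lo_py qy_hi] | hout] := boolP ((lo <= py) && (qy < hi)).
  rewrite leqNgt; apply/negP => hqp.
  exact: (hfree 0 lo 0 hi qx.+1 qy px.+1 py hlo hhi hq hp).
apply: (hmono px.+1 py qx.+1 qy hp hq hpq) => g hg.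
have /orP [//|/andP [g1 g2]] := hpath g hg.
have blocked y : P 0 y.+1 -> py <= y < qy -> y < lo \/ hi <= y.+1 -> False.
  move=> h0 hy hnew; have hl : lk y by have /orP [//|] := hpath y hy; lia.
  by move: (hblock y hl); rewrite h0.
exfalso; have [py_lo|lo_py] := ltnP py lo.
  by apply: (blocked lo.-1); [rewrite prednK //; lia | lia | lia].
by apply: (blocked hi.-1); [rewrite prednK //; lia | lia | lia].
Qed.

Lemma col0_size_le L P lo hi : (forall y, P 0 y -> lo <= y <= hi) ->
  col0_size L P <= \sum_(0 <= y < L) (P 0 y && (lo < y < hi) : nat) + 2.
Proof.
move=> hrange.
apply: (@leq_trans (\sum_(0 <= y < L)
           ((P 0 y && (lo < y < hi) : nat) + (y == lo) + (y == hi)))).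
  by apply: leq_sum => y _; case hy: (P 0 y) => //=; have := hrange y hy; lia.
rewrite !big_split /=.
by have := sum_nat_eq_le1 L lo; have := sum_nat_eq_le1 L hi; lia.
Qed.

Lemma nlinks_span_links L P lk lo hi : (forall y, lk y -> ~~ P 0 y.+1) ->
  nlinks L lk + \sum_(0 <= y < L) (P 0 y && (lo < y < hi) : nat)
    <= nlinks L (span_links lo hi lk).
Proof.
move=> hblock; set f := fun y => (P 0 y && (lo < y < hi) : nat).
have hshift : \sum_(0 <= y < L) f y <= \sum_(0 <= y < L) f y.+1.
  have <- : \sum_(0 <= y < L.+1) f y = \sum_(0 <= y < L) f y.+1.
    by rewrite big_nat_recl // {1}/f ltn0 andbF.
  by rewrite big_nat_recr //= leq_addr.
apply: leq_trans (leq_add (leqnn _) hshift) _.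
rewrite /nlinks -big_split; apply: leq_sum => y _; rewrite /span_links /f.
case hP: (P 0 y.+1) => /=; last by rewrite addn0; case: (lk y).
have /negbTE -> := contraL (hblock y) hP.
by rewrite /=; lia.
Qed.

Lemma admissible_drop_col K L P lk : admissible K.+1 L P lk ->
  (forall y, lk y -> ~~ P 0 y.+1) ->
  exists2 lk', admissible K L (drop_col P) lk' &
               weight K.+1 L P lk <= weight K L (drop_col P) lk' + 2.
Proof.
move=> hadm hblock; have [hsupp hfree hmono hbnd] := hadm.
have [hsmall|hlarge] := leqP (col0_size L P) 1.
  exists lk; last by rewrite /weight npoints_drop_col; lia.
  apply: admissible_drop_col_links hadm _ hbnd.
  by move=> px py qx qy; apply: hmono.
have hy0 : exists y, P 0 y.
  have : col0_size L P != 0 by lia.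
  by rewrite sum_nat_seq_neq0 => /hasP [y _ hy]; exists y; case: (P 0 y) hy.
have hub z : P 0 z -> z <= L by move/hsupp; lia.
case: (ex_minnP hy0) => lo hlo hlomin; case: (ex_maxnP hy0 hub) => hi hhi hhimax.
exists (span_links lo hi lk).
  apply: admissible_drop_col_links hadm _ _; first exact: links_monotone_span.
  by move=> z /orP [/hbnd //|]; have := hsupp 0 hi hhi; lia.
have hrange z : P 0 z -> lo <= z <= hi by move=> hz; rewrite hlomin ?hhimax.
have := col0_size_le L hrange; have := nlinks_span_links L lo hi hblock.
by rewrite /weight npoints_drop_col; lia.
Qed.

Lemma no_dense_two_columns L P lk : links_monotone P lk ->
  ~ (forall y, y < L.+2 -> 3 <= row_size 2 P y + linked lk y).
Proof.
move=> hmono hdense.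
have row2 y : row_size 2 P y = P 0 y + P 1 y.
  by rewrite /row_size !big_nat_recl // big_geq // addn0.
move: (hdense 0 isT) (hdense 1 isT); rewrite !row2 /linked /= => h0 h1.
have hlk0 : lk 0 by move: h0; case: (lk 0); case: (P 0 0); case: (P 1 0).
have : ~~ P 0 1.
  by apply: (link_blocks_col0 (K := 1) hmono hlk0); rewrite row2; lia.
lia.
Qed.

Lemma weight_one_row K P lk : 2 <= K -> admissible K 1 P lk ->
  weight K 1 P lk <= 2 * (K + 1) - 4.
Proof.
move=> hK [_ _ _ hbnd]; rewrite /weight.
have -> : nlinks 1 lk = 0.
  by rewrite /nlinks big_nat1; case h: (lk 0) => //; have := hbnd 0 h.
have : npoints K 1 P <= \sum_(0 <= x < K) 1.
  by apply: leq_sum => x _; rewrite big_nat1; case: (P x 0).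
by rewrite sum_nat_const_nat; lia.
Qed.

Theorem weight_le K L P lk : 2 <= K -> admissible K L.+1 P lk ->
  weight K L.+1 P lk <= 2 * (K + L.+1) - 4.
Proof.
elim: L K P lk => [|L IHL] K P lk hK hadm; first exact: weight_one_row.
elim: K hK P lk hadm => [//|K IHK] hK P lk hadm.
have [/existsP [r hsparse]|/existsPn hdense] :=
  boolP [exists r : 'I_L.+2, row_size K.+1 P r + linked lk r <= 2].
  have hr : r <= L.+1 by rewrite -ltnS.
  have := IHL _ _ _ hK (admissible_del_row hr hadm).
  have := weight_del_row K.+1 P lk hr; lia.
have {}hdense y : y < L.+2 -> 3 <= row_size K.+1 P y + linked lk y.
  by move=> hy; have := hdense (Ordinal hy); rewrite /= -ltnNge.
have [_ _ hmono hbnd] := hadm.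
have [hK1|hK2] := ltnP K 2.
  have eK : K = 1 by lia.
  by subst K; case: (no_dense_two_columns hmono hdense).
have hblock y : lk y -> ~~ P 0 y.+1.
  move=> hy; apply: (link_blocks_col0 (K := K) hmono hy).
  by have := hdense y (ltnW (hbnd y hy)); rewrite /linked hy orbT; lia.
have [lk' hadm' hw] := admissible_drop_col hadm hblock.
by have := IHK hK2 _ _ hadm'; lia.
Qed.

End Configurations.

Lemma grid_le_refl k l : reflexive (@grid_le k l).
Proof. by move=> x; rewrite /grid_le !leqnn. Qed.

Lemma vee3_le_anti : antisymmetric vee3_le.
Proof.
move=> p q /andP []; rewrite /vee3_le => /orP [/eqP //|p0] /orP [/eqP //|q0].
by apply: val_inj; rewrite (eqP p0) (eqP q0).
Qed.

Lemma strong_vee3_in_grid k l (F : {set grid k l}) (a b1 b2 b3 : grid k l) :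
  a \in F -> b1 \in F -> b2 \in F -> b3 \in F ->
  a.1 <= b1.1 -> a.2 <= b3.2 -> b1.1 < b2.1 -> b2.1 < b3.1 ->
  b3.2 < b2.2 -> b2.2 < b1.2 ->
  strong_subposet_in vee3_le (@grid_le k l) F.
Proof.
case: a b1 b2 b3 => [a1 a2] [x1 y1] [x2 y2] [x3 y3] ha h1 h2 h3 /= e1 e2 e3 e4 e5 e6.
pose i (p : 'I_4) := nth (a1, a2) [:: (a1, a2); (x1, y1); (x2, y2); (x3, y3)] p.
have hord p q : vee3_le p q = grid_le (i p) (i q).
  by case: p q => [[|[|[|[|p]]]] hp] [[|[|[|[|q]]]] hq] //;
    rewrite /vee3_le /grid_le /i /=; apply/idP/idP; lia.
exists i; split; [|split] => //.
- move=> p q e; apply: vee3_le_anti.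
  by rewrite !hord e grid_le_refl.
- by case=> [[|[|[|[|p]]]] hp].
Qed.

Definition points_of k l (F : {set grid k l}) x y :=
  [exists p in F, (p.1 == x :> nat) && (p.2 == y :> nat)].

Lemma points_of_ord k l (F : {set grid k l}) (i : 'I_k) (j : 'I_l) :
  points_of F i j = ((i, j) \in F).
Proof.
apply/existsP/idP => [[[i' j'] /and3P [hp /eqP ei /eqP ej]] | h].
  by have -> : (i, j) = (i', j') by congr pair; apply: val_inj.
by exists (i, j); rewrite h !eqxx.
Qed.

Lemma card_points_of k l (F : {set grid k l}) : #|F| = npoints k l (points_of F).
Proof.
have -> : npoints k l (points_of F) = \sum_(i < k) \sum_(j < l) ((i, j) \in F : nat).
  rewrite /npoints big_mkord; apply: eq_bigr => i _.
  by rewrite big_mkord; apply: eq_bigr => j _; rewrite points_of_ord.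
rewrite pair_big /= -sum1_card big_mkcond /=.
by apply: eq_bigr => -[i j] _; case: ((i, j) \in F).
Qed.

Lemma admissible_points_of k l (F : {set grid k l}) : strong_vee3_free F ->
  admissible k l (points_of F) (fun=> false).
Proof.
move=> hF; split=> //.
- by move=> x y /existsP [p /and3P [_ /eqP <- /eqP <-]]; rewrite !ltn_ord.
- move=> a1 a2 x1 y1 x2 y2 x3 y3 ha h1 h2 h3 e1 e2 e3 e4 e5 e6.
  case/existsP: ha => a /and3P [ha /eqP ? /eqP ?].
  case/existsP: h1 => b1 /and3P [hb1 /eqP ? /eqP ?].
  case/existsP: h2 => b2 /and3P [hb2 /eqP ? /eqP ?].
  case/existsP: h3 => b3 /and3P [hb3 /eqP ? /eqP ?].
  subst; exact: hF (strong_vee3_in_grid ha hb1 hb2 hb3 e1 e2 e3 e4 e5 e6).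
- by move=> px py qx qy _ _ hpq /(_ py); rewrite leqnn hpq => /(_ isT).
Qed.

Definition interior n : {set 'I_n} := [set i : 'I_n | 0 < i < n.-1].
Definition frame k l : {set grid k l} := ~: setX (interior k) (interior l).

Lemma card_interior n : #|interior n.+2| = n.
Proof.
have -> : interior n.+2 = ~: [set ord0; ord_max].
  by apply/setP => i; rewrite !inE -!val_eqE /=; have := ltn_ord i; lia.
apply/eqP; rewrite -(eqn_add2l 2).
by have := cardsC [set ord0; @ord_max n.+1]; rewrite cards2 card_ord -val_eqE /= => ->.
Qed.

Lemma card_frame k l : #|frame k.+2 l.+2| = 2 * (k.+2 + l.+2) - 4.
Proof.
apply/eqP; rewrite -(eqn_add2l (k * l)).
have := cardsC (setX (interior k.+2) (interior l.+2)).
rewrite cardsX !card_interior /grid card_prod !card_ord => ->.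
by apply/eqP; nia.
Qed.

Lemma incomparable3_interior k l (p q r : grid k l) :
  ~~ grid_le p q -> ~~ grid_le q p -> ~~ grid_le p r -> ~~ grid_le r p ->
  ~~ grid_le q r -> ~~ grid_le r q ->
  [|| p \notin frame k l, q \notin frame k l | r \notin frame k l].
Proof.
case: p q r => [p1 p2] [q1 q2] [r1 r2]; rewrite /grid_le !inE /= !negbK.
have := ltn_ord p1; have := ltn_ord p2; have := ltn_ord q1.
have := ltn_ord q2; have := ltn_ord r1; have := ltn_ord r2.
lia.
Qed.

Lemma frame_vee3_free k l : strong_vee3_free (frame k l).
Proof.
move=> [i [_ [hin hord]]].
have inc (p q : 'I_4) : val p != 0 -> val q != 0 -> p != q -> ~~ grid_le (i p) (i q).
  by move=> p0 q0 pq; rewrite -hord /vee3_le (negbTE pq) (negbTE p0).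
have := @incomparable3_interior k l
  (i (@Ordinal 4 1 isT)) (i (@Ordinal 4 2 isT)) (i (@Ordinal 4 3 isT)).
by rewrite !inc // !hin => /(_ isT isT isT isT isT isT).
Qed.

Theorem theorem1p5 (k l : nat) : (2 <= k)%N -> (2 <= l)%N ->
  is_La_star_grid_vee3 k l (2 * (k + l) - 4).
Proof.
case: k => [//|[//|k]] _; case: l => [//|[//|l]] _; split.
  by exists (frame k.+2 l.+2); split; [exact: frame_vee3_free | exact: card_frame].
move=> F hF; rewrite card_points_of.
have := weight_le (isT : 2 <= k.+2) (admissible_points_of hF).
by rewrite /weight /nlinks big1 // addn0.
Qed.
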